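(* Let $g\ge1$, $n=g+1$, $k\in\{1,\dots,g\}$, $\kappa_1,\dots,\kappa_n\in\mathbb C$ pairwise distinct and $\lambda_1,\dots,\lambda_g\in\mathbb C^*$. Let $\tilde A$ be the $k\times n$ matrix $\tilde A=V\cdot\mathrm{diag}(1,\lambda_1,\dots,\lambda_g)$, where $V_{ij}=\kappa_j^{\,i-1}$ ($i\in[k]$, $j\in[n]$). Then the matroid of $\tilde A$ is $\mathcal M_{\mathbf a,v_1}$ for every $\mathbf a\in[\mathbf k]$.
   Context: $B\in\mathbb Z^{g\times n}$ has $B_{i,1}=1$, $B_{i,i+1}=-1$, other entries $0$; $Q=BB^T$. $[\mathbf k]\subset\mathbb R^g$ is the set of vectors with entries in $\{-\tfrac{k}{g+1},\tfrac{g+1-k}{g+1}\}$ having $k$ or $k-1$ entries equal to $\tfrac{g+1-k}{g+1}$ (vertices of the Voronoi polytope of $Q$). For $\mathbf a\in[\mathbf k]$: $\mathcal D_{\mathbf a,Q}=\{\mathbf c\in\mathbb Z^g:\mathbf a^TQ\mathbf a=(\mathbf a-\mathbf c)^TQ(\mathbf a-\mathbf c)\}$; $\mathbf s_{\mathbf a}\in\{0,1\}^n$ has $j$-th entry $0$ if $(B^T\mathbf a)_j>0$ and $1$ if $(B^T\mathbf a)_j<0$; $\mathcal M_{\mathbf a,v_1}$ is the matroid on $[n]$ with bases $\{I,|I|=k:\exists\mathbf c\in\mathcal D_{\mathbf a,Q},\ (B^T\mathbf c+\mathbf s_{\mathbf a})_i=1\ \forall i\in I\}$. The matroid of a $k\times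 n$ matrix has as bases the $k$-subsets of columns with nonzero maximal minor. *)

From mathcomp Require Import all_boot all_order all_algebra.
From mathcomp Require Export complex.
From mathcomp Require Export Rstruct.
Set Implicit Arguments. Unset Strict Implicit. Unset Printing Implicit Defensive.
Import Order.TTheory GRing.Theory Num.Theory.
Local Open Scope ring_scope.

Definition C := complex Rdefinitions.R.

(* Indices are 0-based: 'I_g for [g], 'I_g.+1 for [n], n = g+1. *)

Definition Bmat (g : nat) : 'M[int]_(g, g.+1) :=
  \matrix_(i < g, j < g.+1)
    (if (j : nat) == 0%N then 1 else if (j : nat) == i.+1 then -1 else 0).

Definition Qmat (g : nat) : 'M[int]_g := Bmat g *m (Bmat g)^T.

Definition Bq (g : nat) : 'M[rat]_(g, g.+1) := map_mx intr (Bmat g).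
Definition Qq (g : nat) : 'M[rat]_g := map_mx intr (Qmat g).

Definition hi_val (g k : nat) : rat := ((g.+1 - k)%N%:R) / (g.+1)%:R.
Definition lo_val (g k : nat) : rat := - (k%:R / (g.+1)%:R).

Definition in_vertex_class (g k : nat) (a : 'cV[rat]_g) : Prop :=
  (forall i : 'I_g, a i 0 = lo_val g k \/ a i 0 = hi_val g k) /\
  (#|[set i : 'I_g | a i 0 == hi_val g k]| = k \/
   #|[set i : 'I_g | a i 0 == hi_val g k]| = k.-1).

Definition qform (g : nat) (x : 'cV[rat]_g) : rat := (x^T *m Qq g *m x) 0 0.

Definition in_D (g : nat) (a : 'cV[rat]_g) (c : 'cV[int]_g) : Prop :=
  qform a = qform (a - map_mx intr c).

(* s_a in {0,1}^n: 0 if (B^T a)_j > 0, 1 if (B^T a)_j < 0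
   ((B^T a)_j is never 0 for a in [k]). *)
Definition s_vec (g : nat) (a : 'cV[rat]_g) : 'cV[int]_(g.+1) :=
  \col_(j < g.+1) (if ((Bq g)^T *m a) j 0 < 0 then 1 else 0).

Definition M_basis (g k : nat) (a : 'cV[rat]_g) (I : {set 'I_g.+1}) : Prop :=
  #|I| = k /\
  exists c : 'cV[int]_g, in_D a c /\
    forall i, i \in I -> ((Bmat g)^T *m c + s_vec a) i 0 = 1.

Definition max_minor (k n : nat) (A : 'M[C]_(k, n.+1)) (I : {set 'I_n.+1}) : C :=
  \det (\matrix_(i < k, j < k) A i (nth ord0 (enum I) j)).

Definition matrix_basis (k n : nat) (A : 'M[C]_(k, n.+1)) (I : {set 'I_n.+1}) : Prop :=
  #|I| = k /\ max_minor A I != 0.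

Definition diag_entry (g : nat) (lambda : 'I_g -> C) (j : 'I_g.+1) : C :=
  match unlift ord0 j with None => 1 | Some j' => lambda j' end.

Definition Vmat (g k : nat) (kappa : 'I_g.+1 -> C) : 'M[C]_(k, g.+1) :=
  \matrix_(i < k, j < g.+1) kappa j ^+ i.

Definition Atilde (g k : nat) (kappa : 'I_g.+1 -> C) (lambda : 'I_g -> C)
  : 'M[C]_(k, g.+1) :=
  Vmat k kappa *m diag_mx (\row_(j < g.+1) diag_entry lambda j).

(* Both matroids are the uniform matroid U(k, n).  A maximal minor of Ã is a
   Vandermonde determinant in distinct kappa's times a product of nonzero
   diagonal entries.  On the other side, Q(x) = |B^T x|^2 and, for a in [k],
   B^T a = r 1 - 1_S with r = k/(g+1), S the negative coordinates (so s_a = 1_S)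
   and |S| = k because the coordinates of B^T x always sum to 0.  For a k-set I,
   1_I - 1_S has coordinate sum 0, hence equals B^T c for an integer c; then
   B^T (a - c) = r 1 - 1_I has the same norm as r 1 - 1_S, i.e. c lies in
   D_{a,Q}, and B^T c + s_a = 1_I. *)

From mathcomp Require Import all_boot all_order all_algebra.
From mathcomp Require Import ring lra.
Set Implicit Arguments. Unset Strict Implicit. Unset Printing Implicit Defensive.
Import Order.TTheory GRing.Theory Num.Theory.
Local Open Scope ring_scope.

Lemma sumr_indicator (R : pzSemiRingType) (T : finType) (A : {set T}) :
  \sum_j (j \in A)%:R = #|A|%:R :> R.
Proof. by rewrite -natr_sum -sum1_card [in RHS]big_mkcond. Qed.

Lemma sum_sqr_sub_indicator (R : comPzRingType) (n : nat) (r : R) (A : {set 'I_n}) :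
  \sum_j (r - (j \in A)%:R) ^+ 2 = n%:R * r ^+ 2 - (2 * r - 1) * #|A|%:R.
Proof.
transitivity (\sum_(j < n) (r ^+ 2 - (2 * r - 1) * (j \in A)%:R)).
  by apply: eq_bigr => j _; case: (j \in A) => /=; ring.
by rewrite sumrB sumr_const card_ord -mulr_sumr sumr_indicator [_ * r ^+ 2]mulr_natl.
Qed.

Section TransposedB.
Variables (R : pzRingType) (g : nat).
Let BR := map_mx intr (Bmat g) : 'M[R]_(g, g.+1).

Lemma trmxB_mul_ord0 (x : 'cV[R]_g) : (BR^T *m x) ord0 0 = \sum_i x i 0.
Proof. by rewrite !mxE; apply: eq_bigr => i _; rewrite !mxE mul1r. Qed.

Lemma trmxB_mul_lift (x : 'cV[R]_g) (i : 'I_g) : (BR^T *m x) (lift ord0 i) 0 = - x i 0.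
Proof.
rewrite !mxE (bigD1 i) //= big1 ?addr0; first by rewrite !mxE /= eqxx mulN1r.
move=> l; rewrite !mxE /= eqSS eq_sym -(inj_eq val_inj) => /negbTE->.
by rewrite mul0r.
Qed.

Lemma sum_trmxB_mul (x : 'cV[R]_g) : \sum_j (BR^T *m x) j 0 = 0.
Proof.
rewrite big_ord_recl trmxB_mul_ord0.
under [X in _ + X]eq_bigr do rewrite trmxB_mul_lift.
by rewrite sumrN subrr.
Qed.

Lemma trmxB_mul_sum0 (z : 'cV[R]_g.+1) : \sum_j z j 0 = 0 ->
  BR^T *m (\col_i - z (lift ord0 i) 0) = z.
Proof.
move=> z0; apply/matrixP => j l; rewrite [l]ord1.
case: (unliftP ord0 j) => [i ->|->]; first by rewrite trmxB_mul_lift mxE opprK.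
rewrite trmxB_mul_ord0; under eq_bigr do rewrite mxE.
by move: z0; rewrite big_ord_recl => /eqP; rewrite addr_eq0 => /eqP ->; rewrite sumrN.
Qed.

End TransposedB.

Lemma qformE (g : nat) (x : 'cV[rat]_g) :
  qform x = \sum_j ((Bq g)^T *m x) j 0 ^+ 2.
Proof.
rewrite /qform /Qq /Qmat map_mxM -map_trmx -/(Bq g) mulmxA -mulmxA.
have -> : x^T *m Bq g = ((Bq g)^T *m x)^T by rewrite trmx_mul trmxK.
by rewrite mxE; apply: eq_bigr => j _; rewrite mxE expr2.
Qed.

Lemma s_vecE (g : nat) (a : 'cV[rat]_g) (j : 'I_g.+1) :
  s_vec a j 0 = (j \in [set j | ((Bq g)^T *m a) j 0 < 0])%:R.
Proof. by rewrite mxE inE; case: ifP. Qed.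

Section VertexClass.
Variables (g k : nat) (a : 'cV[rat]_g).
Hypotheses (hk1 : (1 <= k)%N) (hkg : (k <= g)%N) (ha : in_vertex_class k a).

Let y := (Bq g)^T *m a.
Let r : rat := k%:R / g.+1%:R.
Let S := [set j | y j 0 < 0].

Lemma trmxB_vertex_entry j : y j 0 = r \/ y j 0 = r - 1.
Proof.
have n_gt0 : 0 < g.+1%:R :> rat by rewrite ltr0n.
have k_r : k%:R = (g%:R + 1) * r by rewrite /r natr1 mulrC divfK ?gt_eqF.
have hi_r : hi_val g k = 1 - r.
  by rewrite /hi_val natrB ?(leq_trans hkg) // mulrBl divff ?gt_eqF.
set H := [set i | a i 0 == hi_val g k].
have aE i : a i 0 = (i \in H)%:R - r.
  rewrite inE; case: (ha.1 i) => ->; last by rewrite eqxx hi_r /=; ring.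
  have /negbTE-> : lo_val g k != hi_val g k by apply/eqP; rewrite hi_r /lo_val -/r; lra.
  by rewrite sub0r.
case: (unliftP ord0 j) => [i ->|->].
  by rewrite /y trmxB_mul_lift aE; case: (i \in H) => /=; [right|left]; ring.
rewrite /y trmxB_mul_ord0 (eq_bigr _ (fun i _ => aE i)) sumrB sumr_indicator.
rewrite sumr_const card_ord -mulr_natl.
case: ha.2 => ->; [left|right]; last rewrite -subn1 natrB //.
all: by rewrite k_r; ring.
Qed.

Lemma trmxB_vertexE j : y j 0 = r - (j \in S)%:R.
Proof.
have r_gt0 : 0 < r by rewrite divr_gt0 ?ltr0n.
have r_lt1 : r < 1 by rewrite ltr_pdivrMr ?ltr0n // mul1r ltr_nat ltnS.
rewrite inE; case: (trmxB_vertex_entry j) => ->.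
  by rewrite ltNge ltW //= subr0.
by rewrite subr_lt0 r_lt1.
Qed.

Lemma card_neg_trmxB_vertex : #|S| = k.
Proof.
have := sum_trmxB_mul a; rewrite -/y (eq_bigr _ (fun j _ => trmxB_vertexE j)).
rewrite sumrB sumr_indicator sumr_const card_ord -[r *+ _]mulr_natl /r mulrC divfK ?pnatr_eq0 //.
by move/eqP; rewrite subr_eq0 eqr_nat eq_sym => /eqP.
Qed.

End VertexClass.

Lemma M_basis_uniform (g k : nat) (a : 'cV[rat]_g) (I : {set 'I_g.+1}) :
  (1 <= k)%N -> (k <= g)%N -> in_vertex_class k a -> M_basis k a I <-> #|I| = k.
Proof.
move=> hk1 hkg ha; split=> [[] // | hI].
set y := (Bq g)^T *m a; set S := [set j | y j 0 < 0].
pose z : 'cV[int]_g.+1 := \col_j ((j \in I)%:R - (j \in S)%:R).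
have z_sum0 : \sum_j z j 0 = 0.
  under eq_bigr do rewrite mxE.
  by rewrite sumrB !sumr_indicator hI (card_neg_trmxB_vertex hk1 hkg ha) subrr.
pose c : 'cV[int]_g := \col_i - z (lift ord0 i) 0.
have Bc : (Bmat g)^T *m c = z.
  by rewrite -[Bmat g](map_mx_id (@intz)) trmxB_mul_sum0.
split=> //; exists c; split=> [|j jI]; last first.
  by rewrite mxE Bc s_vecE -/y -/S !mxE jI subrK.
have ya_c j : ((Bq g)^T *m (a - map_mx intr c)) j 0 = k%:R / g.+1%:R - (j \in I)%:R.
  have Bq_c : (Bq g)^T *m map_mx intr c = map_mx intr z.
    by rewrite -Bc map_mxM map_trmx.
  rewrite mulmxBr Bq_c mxE -/y (trmxB_vertexE hk1 hkg ha) !mxE rmorphB /= !rmorph_nat -/S.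
  by ring.
rewrite /in_D !qformE; under eq_bigr do rewrite (trmxB_vertexE hk1 hkg ha).
under [RHS]eq_bigr do rewrite ya_c.
by rewrite !sum_sqr_sub_indicator hI (card_neg_trmxB_vertex hk1 hkg ha).
Qed.

Lemma nth_enum_inj (T : finType) (k : nat) (I : {set T}) (x0 : T) :
  #|I| = k -> injective (fun j : 'I_k => nth x0 (enum I) j).
Proof.
move=> hI i j /eqP; rewrite nth_uniq ?enum_uniq -?cardE ?hI //.
by move/eqP/val_inj.
Qed.

Lemma diag_entry_neq0 (g : nat) (lambda : 'I_g -> C) (j : 'I_g.+1) :
  (forall i, lambda i != 0) -> diag_entry lambda j != 0.
Proof. by rewrite /diag_entry; case: (unliftP ord0 j) => [i _|_]; rewrite ?oner_eq0. Qed.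

Lemma colsub_Atilde (g k m : nat) (kappa : 'I_g.+1 -> C) (lambda : 'I_g -> C)
    (f : 'I_m -> 'I_g.+1) :
  colsub f (Atilde k kappa lambda) =
  Vandermonde k (\row_j kappa (f j)) *m diag_mx (\row_j diag_entry lambda (f j)).
Proof. by apply/matrixP => i j; rewrite /Atilde !mul_mx_diag !mxE. Qed.

Lemma det_colsub_Atilde_neq0 (g k : nat) (kappa : 'I_g.+1 -> C) (lambda : 'I_g -> C)
    (f : 'I_k -> 'I_g.+1) :
  injective kappa -> (forall i, lambda i != 0) -> injective f ->
  \det (colsub f (Atilde k kappa lambda)) != 0.
Proof.
move=> kappa_inj lambda_neq0 f_inj.
rewrite colsub_Atilde det_mulmx det_diag det_Vandermonde mulf_neq0 //.
  apply/prodf_neq0 => i _; apply/prodf_neq0 => j ij; rewrite !mxE subr_eq0.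
  by apply: contraTneq ij => /kappa_inj/f_inj->; rewrite ltnn.
by apply/prodf_neq0 => i _; rewrite mxE diag_entry_neq0.
Qed.

Lemma matrix_basis_Atilde_uniform (g k : nat) (kappa : 'I_g.+1 -> C) (lambda : 'I_g -> C)
    (I : {set 'I_g.+1}) :
  injective kappa -> (forall i, lambda i != 0) ->
  matrix_basis (Atilde k kappa lambda) I <-> #|I| = k.
Proof.
move=> kappa_inj lambda_neq0; split=> [[] // | hI]; split=> //.
exact: det_colsub_Atilde_neq0 kappa_inj lambda_neq0 (nth_enum_inj (x0 := ord0) hI).
Qed.

Theorem proposition5p6 (g k : nat) (hg : (1 <= g)%N) (hk1 : (1 <= k)%N) (hkg : (k <= g)%N)
  (kappa : 'I_g.+1 -> C) (hkappa : injective kappa)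
  (lambda : 'I_g -> C) (hlambda : forall i, lambda i != 0)
  (a : 'cV[rat]_g) (ha : @in_vertex_class g k a) :
  forall I : {set 'I_g.+1}, matrix_basis (@Atilde g k kappa lambda) I <-> @M_basis g k a I.
Proof. by move=> I; rewrite matrix_basis_Atilde_uniform // M_basis_uniform. Qed.
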